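(* Let $A$ be a right noetherian graded algebra and $e\in A$ an idempotent such that $eAe$ is a right noetherian graded algebra. If $Ae\in\mathrm{grmod}\,eAe$ and $(-)e:\mathrm{tails}\,A\to\mathrm{tails}\,eAe$ is an equivalence, then $A/(e)$ is a torsion $A$-module.
   Context: Graded algebras are $\mathbb{N}$-graded algebras over an algebraically closed field $k$. For a graded module $M$, $(-)e$ sends $M$ to $Me$ (i.e. $M\otimes_A Ae$), a graded right $eAe$-module. A graded right $A$-module $M$ is torsion if for every $m\in M$ there is $n$ with $mA_{\ge n}=0$. $\mathrm{grmod}\,B$ is the category of finitely generated graded right $B$-modules, $\mathrm{tails}\,B=\mathrm{grmod}\,B/\mathrm{tors}\,B$ where $\mathrm{tors}\,B$ is the subcategory of finite-dimensional (torsion) modules. $(e)$ is the two-sided ideal generated by $e$. *)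

From mathcomp Require Import all_boot all_algebra.

Set Implicit Arguments.
Unset Strict Implicit.
Unset Printing Implicit Defensive.

Import GRing.Theory.
Local Open Scope ring_scope.

Section GradedDefs.

Variables (k : closedFieldType) (A : algType k).

Definition is_grading (Ad : nat -> A -> Prop) : Prop :=
  [/\ [/\ (forall n, Ad n 0),
      (forall n a b, Ad n a -> Ad n b -> Ad n (a + b))
    & (forall n (c : k) a, Ad n a -> Ad n (c *: a))],
      (forall i j a b, Ad i a -> Ad j b -> Ad (i + j)%N (a * b)),
      Ad 0%N 1,
      (forall a, exists (m : nat) (c : nat -> A),
          (forall i, Ad i (c i)) /\ a = \sum_(i < m) c i)
    & (forall (m : nat) (c : nat -> A), (forall i, Ad i (c i)) ->
          \sum_(i < m) c i = 0 -> forall i, (i < m)%N -> c i = 0)].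

Definition geq_part (Ad : nat -> A -> Prop) (n : nat) (a : A) : Prop :=
  exists (m : nat) (c : nat -> A),
    (forall i, Ad (n + i)%N (c i)) /\ a = \sum_(i < m) c i.

(** The corner algebra fAf (for f = 1 this is all of A). *)
Definition corner (f a : A) : Prop := f * a * f = a.

Definition right_noetherian_corner (f : A) : Prop :=
  forall I : A -> Prop,
    (forall a, I a -> corner f a) -> I 0 ->
    (forall a b, I a -> I b -> I (a + b)) ->
    (forall a b, I a -> corner f b -> I (a * b)) ->
    exists (n : nat) (g : nat -> A), (forall i, (i < n)%N -> I (g i)) /\
      forall a, I a -> exists c : nat -> A,
        (forall i, corner f (c i)) /\ a = \sum_(i < n) g i * c i.

Definition ideal_gen (e y : A) : Prop :=
  exists (m : nat) (x z : nat -> A), y = \sum_(i < m) x i * e * z i.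

(** A module is the subset [rm_S] of a carrier type,
    with group operations, a right action of A (only its restriction to the
    corner fAf is constrained) and a Z-grading [rm_deg]. *)
Record rawmod := RawMod {
  rm_car : Type;
  rm_S : rm_car -> Prop;
  rm_zero : rm_car;
  rm_add : rm_car -> rm_car -> rm_car;
  rm_opp : rm_car -> rm_car;
  rm_act : rm_car -> A -> rm_car;
  rm_deg : int -> rm_car -> Prop }.

Arguments rm_S : clear implicits.
Arguments rm_deg : clear implicits.
Arguments rm_zero : clear implicits.
Unset Implicit Arguments.

Definition msum (M : rawmod) (s : seq (rm_car M)) : rm_car M :=
  foldr (@rm_add M) (rm_zero M) s.
Arguments msum {M} s.

(** sum_{i = -n}^{n} c i *)
Definition zsum (M : rawmod) (n : nat) (c : int -> rm_car M) : rm_car M :=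
  msum [seq c (i%:Z - n%:Z) | i <- iota 0 (n + n).+1].
Arguments zsum {M} n c.

Definition msub (M : rawmod) (x y : rm_car M) := rm_add x (rm_opp y).
Arguments msub {M} x y.

Definition is_grmod (Ad : nat -> A -> Prop) (f : A) (M : rawmod) : Prop :=
  let S := rm_S M in let z := rm_zero M in let add := @rm_add M in
  let opp := @rm_opp M in let act := @rm_act M in let deg := rm_deg M in
  [/\
      [/\ [/\ S z, (forall x y, S x -> S y -> S (add x y))
            & (forall x, S x -> S (opp x))],
          (forall x y w, S x -> S y -> S w -> add x (add y w) = add (add x y) w),
          (forall x y, S x -> S y -> add x y = add y x),
          (forall x, S x -> add z x = x)
        & (forall x, S x -> add x (opp x) = z)],
      [/\ (forall x a, S x -> corner f a -> S (act x a)),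
          (forall x a b, S x -> corner f a -> corner f b ->
              act x (a + b) = add (act x a) (act x b)),
          (forall x y a, S x -> S y -> corner f a ->
              act (add x y) a = add (act x a) (act y a)),
          (forall x a b, S x -> corner f a -> corner f b ->
              act x (a * b) = act (act x a) b)
        & (forall x, S x -> act x f = x)],
      [/\ (forall i x, deg i x -> S x), (forall i, deg i z),
          (forall i x y, deg i x -> deg i y -> deg i (add x y)),
          (forall i x, deg i x -> deg i (opp x))
        & (forall i j x a, deg i x -> corner f a -> Ad j a ->
              deg (i + j%:Z) (act x a))],
      (forall x, S x -> exists (n : nat) (c : int -> rm_car M),
          (forall i, deg i (c i)) /\ x = zsum n c)
    & (forall (n : nat) (c : int -> rm_car M), (forall i, deg i (c i)) ->
          zsum n c = z -> forall i, (`|i| <= n)%N -> c i = z)].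

Definition fg_mod (f : A) (M : rawmod) : Prop :=
  exists (n : nat) (g : nat -> rm_car M), (forall i, (i < n)%N -> rm_S M (g i)) /\
    forall x, rm_S M x -> exists c : nat -> A, (forall i, corner f (c i)) /\
      x = msum [seq rm_act (g i) (c i) | i <- iota 0 n].

Definition in_grmod (Ad : nat -> A -> Prop) (f : A) M := is_grmod Ad f M /\ fg_mod f M.

Definition torsion_el (Ad : nat -> A -> Prop) (f : A) (M : rawmod)
  (x : rm_car M) : Prop :=
  exists n, forall a, corner f a -> geq_part Ad n a -> rm_act x a = rm_zero M.

Definition tau (Ad : nat -> A -> Prop) (f : A) (M : rawmod) (x : rm_car M) :=
  rm_S M x /\ torsion_el Ad f M x.

Definition eqmod (Ad : nat -> A -> Prop) (f : A) (M : rawmod) (x y : rm_car M) := tau Ad f M (msub x y).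

Definition is_gsub (Ad : nat -> A -> Prop) (f : A) (M : rawmod) (P : rm_car M -> Prop) : Prop :=
  [/\ (forall x, P x -> rm_S M x) /\ P (rm_zero M),
      (forall x y, P x -> P y -> P (rm_add x y)),
      (forall x, P x -> P (rm_opp x)),
      (forall x a, P x -> corner f a -> P (rm_act x a))
    & (forall x, P x -> exists (n : nat) (c : int -> rm_car M),
          (forall i, rm_deg M i (c i) /\ P (c i)) /\ x = zsum n c)].

Definition cotorsion (Ad : nat -> A -> Prop) (f : A) (M : rawmod) (P : rm_car M -> Prop) : Prop :=
  forall x, rm_S M x -> exists n, forall a, corner f a -> geq_part Ad n a ->
    P (rm_act x a).

(** A representative (P, phi) of a morphism pi M -> pi N in tails fAf:
    a graded morphism P -> N / tau N with P <= M, M/P torsion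
    (phi gives representatives of the values). *)
Definition is_trep (Ad : nat -> A -> Prop) (f : A) (M N : rawmod) (P : rm_car M -> Prop)
  (phi : rm_car M -> rm_car N) : Prop :=
  [/\ is_gsub Ad f M P /\ cotorsion Ad f M P,
      (forall x, P x -> rm_S N (phi x)),
      (forall x y, P x -> P y ->
          eqmod Ad f N (phi (rm_add x y)) (rm_add (phi x) (phi y))),
      (forall x a, P x -> corner f a ->
          eqmod Ad f N (phi (rm_act x a)) (rm_act (phi x) a))
    & (forall i x, P x -> rm_deg M i x ->
          exists y, rm_deg N i y /\ eqmod Ad f N (phi x) y)].

(** Equality of morphisms in tails (colimit identification). *)
Definition trep_eq (Ad : nat -> A -> Prop) (f : A) (M N : rawmod) (P1 : rm_car M -> Prop)
  (phi1 : rm_car M -> rm_car N) (P2 : rm_car M -> Prop)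
  (phi2 : rm_car M -> rm_car N) : Prop :=
  exists P3, [/\ is_gsub Ad f M P3, cotorsion Ad f M P3 &
    forall x, P3 x -> [/\ P1 x, P2 x & eqmod Ad f N (phi1 x) (phi2 x)]].

(** (Q, psi) o (P, phi) = (R, chi) in tails. *)
Definition trep_comp_eq (Ad : nat -> A -> Prop) (f : A) (M N L : rawmod)
  (P : rm_car M -> Prop) (phi : rm_car M -> rm_car N)
  (Q : rm_car N -> Prop) (psi : rm_car N -> rm_car L)
  (R : rm_car M -> Prop) (chi : rm_car M -> rm_car L) : Prop :=
  exists P3, [/\ is_gsub Ad f M P3, cotorsion Ad f M P3 &
    forall x, P3 x -> [/\ P x, R x & exists q, [/\ Q q, eqmod Ad f N (phi x) q
                                                  & eqmod Ad f L (psi q) (chi x)]]].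

Definition mod_e (e : A) (M : rawmod) : rawmod :=
  @RawMod (rm_car M) (fun x => rm_S M x /\ rm_act x e = x) (rm_zero M)
    (@rm_add M) (@rm_opp M) (@rm_act M)
    (fun i x => rm_deg M i x /\ rm_act x e = x).

Definition sub_e (e : A) (M : rawmod) (P : rm_car M -> Prop) : rm_car M -> Prop :=
  fun x => P x /\ rm_act x e = x.

Definition map_e (e : A) (M N : rawmod) (phi : rm_car M -> rm_car N) :
  rm_car M -> rm_car N := fun x => rm_act (phi x) e.

Arguments sub_e e {M} P.
Arguments map_e e {M N} phi.

Definition tails_e_equivalence (Ad : nat -> A -> Prop) (e : A) : Prop :=
  [/\
      (forall M N : rawmod, in_grmod Ad 1 M -> in_grmod Ad 1 N ->
        forall (Q : rm_car M -> Prop) (psi : rm_car M -> rm_car N),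
          is_trep Ad e (mod_e e M) (mod_e e N) Q psi ->
          exists (P : rm_car M -> Prop) (phi : rm_car M -> rm_car N),
            is_trep Ad 1 M N P phi /\
            trep_eq Ad e (mod_e e M) (mod_e e N)
              (sub_e e P) (map_e e phi) Q psi),
      (forall M N : rawmod, in_grmod Ad 1 M -> in_grmod Ad 1 N ->
        forall (P1 P2 : rm_car M -> Prop) (phi1 phi2 : rm_car M -> rm_car N),
          is_trep Ad 1 M N P1 phi1 -> is_trep Ad 1 M N P2 phi2 ->
          trep_eq Ad e (mod_e e M) (mod_e e N)
            (sub_e e P1) (map_e e phi1) (sub_e e P2) (map_e e phi2) ->
          trep_eq Ad 1 M N P1 phi1 P2 phi2)
    &
      (forall N : rawmod, in_grmod Ad e N ->
        exists M : rawmod, in_grmod Ad 1 M /\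
        exists (P : rm_car M -> Prop) (alpha : rm_car M -> rm_car N)
               (Q : rm_car N -> Prop) (beta : rm_car N -> rm_car M),
          [/\ is_trep Ad e (mod_e e M) N P alpha,
              is_trep Ad e N (mod_e e M) Q beta,
              trep_comp_eq Ad e (mod_e e M) N (mod_e e M) P alpha Q beta
                (rm_S (mod_e e M)) id
            & trep_comp_eq Ad e N (mod_e e M) N Q beta P alpha (rm_S N) id])].

End GradedDefs.

Arguments is_grading {k A}.
Arguments geq_part {k A}.
Arguments corner {k A}.
Arguments right_noetherian_corner {k A}.
Arguments ideal_gen {k A}.
Arguments is_grmod {k A}.
Arguments fg_mod {k A}.
Arguments in_grmod {k A}.
Arguments torsion_el {k A}.
Arguments tau {k A}.
Arguments eqmod {k A}.
Arguments is_gsub {k A}.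
Arguments cotorsion {k A}.
Arguments is_trep {k A}.
Arguments trep_eq {k A}.
Arguments trep_comp_eq {k A}.
Arguments mod_e {k A}.
Arguments tails_e_equivalence {k A}.
Arguments msum {k A M} s.
Arguments zsum {k A M} n c.
Arguments msub {k A M} x y.
Arguments sub_e {k A} e {M} P.
Arguments map_e {k A} e {M N} phi.

(* Let Q = A/(e), the cyclic graded A-module generated by the class of 1.  Since
   Ae lies in (e), Qe = 0, so the identity and the zero morphism of Q become equal
   after applying (-)e; by faithfulness they are already equal in tails A, i.e. Q
   is torsion modulo a submodule with torsion quotient.  Hence every b in A_{>=n0}
   is torsion modulo (e): b A_{>=m} lies in (e) for some m depending on b.
   Noetherianity makes the bound uniform: the right ideal of the y with
   (yA)_d in (e) for d >> 0 is finitely generated, so one degree works for all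
   homogeneous elements of high degree, and A_{>=N} lies in (e) for some N. *)

From mathcomp Require Import all_boot all_algebra.
From mathcomp Require Import zify.
From Stdlib Require Import ClassicalEpsilon FunctionalExtensionality PropExtensionality.
Import GRing.Theory.
Local Open Scope ring_scope.

Set Implicit Arguments.
Unset Strict Implicit.
Unset Printing Implicit Defensive.

Section Grading.
Variables (k : closedFieldType) (A : algType k) (Ad : nat -> A -> Prop).
Hypothesis grading : is_grading Ad.

Lemma hom0 n : Ad n 0.
Proof. by case: grading => -[] + _ _ _ _ _ _; apply. Qed.

Lemma homD n x y : Ad n x -> Ad n y -> Ad n (x + y).
Proof. by case: grading => -[] _ + _ _ _ _ _; apply. Qed.

Lemma homN n x : Ad n x -> Ad n (- x).
Proof. by case: grading => -[] _ _ hZ _ _ _ _ /(hZ _ (-1)); rewrite scaleN1r. Qed.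

Lemma homM i j x y : Ad i x -> Ad j y -> Ad (i + j) (x * y).
Proof. by case: grading => _ + _ _ _; apply. Qed.

Lemma hom_decomp x :
  exists m (c : nat -> A), (forall i, Ad i (c i)) /\ x = \sum_(i < m) c i.
Proof. by case: grading => _ _ _ + _; apply. Qed.

Lemma hom_sum_eq0 m (c : nat -> A) : (forall i, Ad i (c i)) ->
  \sum_(i < m) c i = 0 -> forall i, (i < m)%N -> c i = 0.
Proof. by case: grading => _ _ _ _; apply. Qed.

Lemma hom_geq_part n d h : Ad d h -> (n <= d)%N -> geq_part Ad n h.
Proof.
move=> hh le; exists (d - n).+1, (fun i => if i == (d - n)%N then h else 0); split.
  by move=> i; case: eqP => [->|_]; [rewrite subnKC | apply: hom0].
by rewrite big_ord_recr /= eqxx big1 ?add0r // => i _; rewrite ltn_eqF.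
Qed.

Definition trunc (m : nat) (c : nat -> A) i := if (i < m)%N then c i else 0.

Lemma trunc_hom {m c} : (forall i, Ad i (c i)) -> forall i, Ad i (trunc m c i).
Proof. by move=> hc i; rewrite /trunc; case: ifP => _; [apply: hc | apply: hom0]. Qed.

Lemma sum_trunc m n c : (m <= n)%N -> \sum_(i < n) trunc m c i = \sum_(i < m) c i.
Proof.
move=> le; rewrite -(subnKC le) big_split_ord /= [X in _ + X]big1 ?addr0.
  by apply: eq_bigr => i _; rewrite /trunc ltn_ord.
by move=> i _; rewrite /trunc ltnNge leq_addr.
Qed.

Lemma trunc_ge m c i : (m <= i)%N -> trunc m c i = 0.
Proof. by rewrite /trunc ltnNge => ->. Qed.

Lemma trunc_uniq {m c m' c'} : (forall i, Ad i (c i)) -> (forall i, Ad i (c' i)) ->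
  \sum_(i < m) c i = \sum_(i < m') c' i -> trunc m c =1 trunc m' c'.
Proof.
move=> hc hc' eq_sum d; apply/eqP; rewrite -subr_eq0; apply/eqP.
have [lt|ge] := ltnP d (maxn m m'); last first.
  by rewrite !trunc_ge ?subrr //; apply: leq_trans ge; rewrite ?leq_maxl ?leq_maxr.
apply: (@hom_sum_eq0 (maxn m m') (fun i => trunc m c i - trunc m' c' i)) => //.
  by move=> i; apply: homD; [|apply: homN]; apply: trunc_hom.
by rewrite sumrB !sum_trunc ?leq_maxl ?leq_maxr // eq_sum subrr.
Qed.

Definition hcomp (d : nat) (x : A) : A :=
  epsilon (inhabits 0) (fun y => exists m c,
    [/\ forall i, Ad i (c i), x = \sum_(i < m) c i & y = trunc m c d]).

Lemma hcomp_trunc d {x m c} : (forall i, Ad i (c i)) -> x = \sum_(i < m) c i ->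
  hcomp d x = trunc m c d.
Proof.
move=> hc ex; rewrite /hcomp.
have [|m' [c' [hc' ex' ->]]] := epsilon_spec (inhabits 0) (fun y => exists m c,
    [/\ forall i, Ad i (c i), x = \sum_(i < m) c i & y = trunc m c d]).
  by exists (trunc m c d), m, c.
by apply: (trunc_uniq hc' hc); rewrite -ex' -ex.
Qed.

Lemma hcompP d x : Ad d (hcomp d x).
Proof.
have [m [c [hc ex]]] := hom_decomp x.
by rewrite (hcomp_trunc d hc ex); apply: trunc_hom.
Qed.

Lemma hcomp_hom {j h} d : Ad j h -> hcomp d h = if d == j then h else 0.
Proof.
move=> hj; rewrite (@hcomp_trunc d h j.+1 (fun i => if i == j then h else 0)).
- by rewrite /trunc; case: eqP => [->|_]; [rewrite ltnSn | case: ifP].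
- by move=> i; case: eqP => [->|_]; [|apply: hom0].
- by rewrite big_ord_recr /= eqxx big1 ?add0r // => i _; rewrite ltn_eqF.
Qed.

Lemma hcomp0 d : hcomp d 0 = 0.
Proof. by rewrite (hcomp_hom d (hom0 0)); case: eqP. Qed.

Lemma hcompD d x y : hcomp d (x + y) = hcomp d x + hcomp d y.
Proof.
have [mx [cx [hx ex]]] := hom_decomp x; have [my [cy [hy ey]]] := hom_decomp y.
rewrite (hcomp_trunc d hx ex) (hcomp_trunc d hy ey).
rewrite (@hcomp_trunc d _ (maxn mx my) (fun i => trunc mx cx i + trunc my cy i)).
- have [lt|ge] := ltnP d (maxn mx my); first by rewrite /trunc lt.
  by rewrite !trunc_ge ?addr0 //; apply: leq_trans ge; rewrite ?leq_maxl ?leq_maxr.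
- by move=> i; apply: homD; apply: trunc_hom.
- by rewrite big_split /= !sum_trunc ?leq_maxl ?leq_maxr // -ex -ey.
Qed.

Lemma hcompN d x : hcomp d (- x) = - hcomp d x.
Proof. by apply/eqP; rewrite -addr_eq0 -hcompD addNr hcomp0. Qed.

Lemma hcomp_sum d (J : Type) (r : seq J) (P : pred J) (F : J -> A) :
  hcomp d (\sum_(i <- r | P i) F i) = \sum_(i <- r | P i) hcomp d (F i).
Proof. exact: (big_morph (hcomp d) (hcompD d) (hcomp0 d)). Qed.

Lemma hcompMl {j h} y d : Ad j h ->
  hcomp d (h * y) = if (j <= d)%N then h * hcomp (d - j) y else 0.
Proof.
move=> hj; have [m [c [hc ey]]] := hom_decomp y.
rewrite (hcomp_trunc (d - j) hc ey).
pose F t := if (j <= t)%N then h * trunc m c (t - j) else 0.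
rewrite (@hcomp_trunc d (h * y) (j + m) F).
- rewrite /trunc /F; case: (leqP j d) => hjd; last by case: ifP.
  by case: ltnP => hd //; rewrite ifF ?mulr0 //; lia.
- move=> t; rewrite /F; case: leqP => ht; last exact: hom0.
  by rewrite -{1}(subnKC ht); apply: homM => //; apply: trunc_hom.
- rewrite big_split_ord /= big1 ?add0r; last by move=> i _; rewrite /F leqNgt ltn_ord.
  rewrite ey mulr_sumr; apply: eq_bigr => i _.
  by rewrite /F leq_addr addKn /trunc ltn_ord.
Qed.

End Grading.

Section Ideals.
Variables (T : Type) (R : nmodType) (I : R -> Prop).
Hypotheses (ideal0 : I 0) (idealD : forall x y, I x -> I y -> I (x + y)).

Lemma ideal_sum (r : seq T) (P : pred T) (F : T -> R) :
  (forall i, I (F i)) -> I (\sum_(i <- r | P i) F i).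
Proof. by move=> hF; apply: big_ind. Qed.

End Ideals.

Section IdealGen.
Variables (k : closedFieldType) (A : algType k) (e : A).
Local Notation I := (ideal_gen e).

Lemma ideal_gen0 : I 0.
Proof. by exists 0%N, (fun _ => 0), (fun _ => 0); rewrite big_ord0. Qed.

Lemma ideal_genD x y : I x -> I y -> I (x + y).
Proof.
move=> [m1 [x1 [z1 ->]]] [m2 [x2 [z2 ->]]].
exists (m1 + m2)%N, (fun i => if (i < m1)%N then x1 i else x2 (i - m1)%N),
  (fun i => if (i < m1)%N then z1 i else z2 (i - m1)%N).
rewrite big_split_ord /=; congr (_ + _); apply: eq_bigr => i _ /=.
  by rewrite ltn_ord.
by rewrite ltnNge leq_addr /= addKn.
Qed.

Lemma ideal_genN x : I x -> I (- x).
Proof.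
move=> [m [x1 [z1 ->]]]; exists m, (fun i => - x1 i), z1.
by rewrite -sumrN; apply: eq_bigr => i _; rewrite !mulNr.
Qed.

Lemma ideal_genMl c x : I x -> I (c * x).
Proof.
move=> [m [x1 [z1 ->]]]; exists m, (fun i => c * x1 i), z1.
by rewrite mulr_sumr; apply: eq_bigr => i _; rewrite !mulrA.
Qed.

Lemma ideal_genMr x c : I x -> I (x * c).
Proof.
move=> [m [x1 [z1 ->]]]; exists m, x1, (fun i => z1 i * c).
by rewrite mulr_suml; apply: eq_bigr => i _; rewrite mulrA.
Qed.

Lemma ideal_gen_id : I e.
Proof. by exists 1%N, (fun _ => 1), (fun _ => 1); rewrite big_ord1 mul1r mulr1. Qed.

Lemma ideal_gen_hcomp (Ad : nat -> A -> Prop) : is_grading Ad -> Ad 0%N e ->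
  forall d x, I x -> I (hcomp Ad d x).
Proof.
move=> grading he0 d _ [r [x [z ->]]].
rewrite (hcomp_sum grading); apply: (ideal_sum ideal_gen0 ideal_genD) => i.
have [m [c [hc ->]]] := hom_decomp grading (x i).
rewrite !mulr_suml (hcomp_sum grading); apply: (ideal_sum ideal_gen0 ideal_genD) => l.
have hce : Ad l (c l * e) by have := homM grading (hc l) he0; rewrite addn0.
rewrite (hcompMl grading (z i) d hce); case: ifP => _; last exact: ideal_gen0.
by exists 1%N, (fun _ => c l), (fun _ => hcomp Ad (d - l) (z i)); rewrite big_ord1.
Qed.

End IdealGen.

#[local] Arguments rm_S {k A} r.
#[local] Arguments rm_zero {k A} r.
#[local] Arguments rm_deg {k A} r.

Section GradedModules.
Variables (k : closedFieldType) (A : algType k) (Ad : nat -> A -> Prop) (f : A).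

Section OneModule.
Variable M : rawmod A.
Hypothesis hM : is_grmod Ad f M.
Local Notation S := (rm_S M).
Local Notation z := (rm_zero M).

Lemma grmod_addr0 x : S x -> rm_add x z = x.
Proof.
case: hM => -[[hz _ _] _ hC h0 _] _ _ _ _ hx.
by rewrite hC // h0.
Qed.

Lemma grmod_opp0 : rm_opp z = z.
Proof.
case: hM => -[[hz _ hN] _ _ h0 hinv] _ _ _ _.
by rewrite -{2}(hinv z hz) h0 //; apply: hN.
Qed.

Lemma grmod_act0 a : corner f a -> rm_act z a = z.
Proof.
move=> ha; case: hM => -[[hz _ hN] hA _ h0 hinv] [hS _ hactD _ _] _ _ _.
set y := rm_act z a; have hy : S y by apply: hS.
have yy : rm_add y y = y by rewrite /y -hactD // h0.
by rewrite -(hinv y hy) -{2}yy -hA ?hinv ?grmod_addr0 //; apply: hN.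
Qed.

Lemma grmod_msubr0 x : S x -> msub x z = x.
Proof. by move=> hx; rewrite /msub grmod_opp0 grmod_addr0. Qed.

Lemma zsum_zero : zsum 0 (fun _ => z) = z.
Proof.
by case: hM => -[[hz _ _] _ _ h0 _] _ _ _ _; rewrite /zsum /msum /= h0.
Qed.

Lemma tau_zero : tau Ad f M z.
Proof.
case: hM => -[[hz _ _] _ _ _ _] _ _ _ _.
by split => //; exists 0%N => a ha _; apply: grmod_act0.
Qed.

Lemma eqmod_refl x : S x -> eqmod Ad f M x x.
Proof.
case: hM => -[_ _ _ _ hinv] _ _ _ _ hx.
by rewrite /eqmod /msub hinv //; apply: tau_zero.
Qed.

Lemma gsub_full : is_gsub Ad f M S /\ cotorsion Ad f M S.
Proof.
case: hM => -[[hz hD hN] _ _ _ _] [hS _ _ _ _] [hdS _ _ _ _] hdec _.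
split; last by move=> x hx; exists 0%N => a ha _; apply: hS.
split => //.
move=> x hx; have [n [c [hc ex]]] := hdec x hx.
by exists n, c; split => // i; split => //; apply: (hdS i).
Qed.

Lemma trep_id : is_trep Ad f M M S id.
Proof.
case: hM => -[[_ hD _] _ _ _ _] [hS _ _ _ _] [hdS _ _ _ _] _ _.
split => //; first exact: gsub_full.
- by move=> x y hx hy; apply: eqmod_refl; apply: hD.
- by move=> x a hx ha; apply: eqmod_refl; apply: hS.
- by move=> i x hx hd; exists x; split => //; apply: eqmod_refl.
Qed.

End OneModule.

Lemma trep_zero (M N : rawmod A) : is_grmod Ad f M -> is_grmod Ad f N ->
  is_trep Ad f M N (rm_S M) (fun _ => rm_zero N).
Proof.
move=> hM hN; have [[[hz _ _] _ _ h0 _] _ [_ hd0 _ _ _] _ _] := hN.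
split => //; first exact: gsub_full.
- by move=> x y _ _; rewrite h0 //; apply: eqmod_refl.
- by move=> x a _ ha; rewrite grmod_act0 //; apply: eqmod_refl.
- by move=> i x _ _; exists (rm_zero N); split => //; apply: eqmod_refl.
Qed.

End GradedModules.

Lemma corner1 (k : closedFieldType) (A : algType k) (a : A) : corner 1 a.
Proof. by rewrite /corner mul1r mulr1. Qed.

Section ModE.
Variables (k : closedFieldType) (A : algType k) (Ad : nat -> A -> Prop) (e : A).
Variable M : rawmod A.
Hypothesis hM : is_grmod Ad 1 M.
Hypothesis mod_e0 : forall x, rm_S M x -> rm_act x e = x -> x = rm_zero M.
Local Notation z := (rm_zero M).

Lemma trep_eq_mod_e0 :
  trep_eq Ad e (mod_e e M) (mod_e e M) (sub_e e (rm_S M)) (map_e e id)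
    (sub_e e (rm_S M)) (map_e e (fun _ => z)).
Proof.
have [[[hz _ _] _ _ h0 _] _ [_ hd0 _ _ _] _ _] := hM.
have ze : rm_act z e = z := grmod_act0 hM (corner1 e).
have tau_z : tau Ad e (mod_e e M) z.
  by split => //; exists 0%N => a _ _; exact: (grmod_act0 hM (corner1 a)).
exists (fun x => x = z); split.
- split => //=.
  + by split => // x ->.
  + by move=> x y -> ->; rewrite h0.
  + by move=> x ->; rewrite (grmod_opp0 hM).
  + by move=> x a -> _; exact: (grmod_act0 hM (corner1 a)).
  + move=> x ->; exists 0%N, (fun _ => z); split; last exact: (esym (zsum_zero hM)).
    by move=> i; split => //; split.
- move=> x [hx hxe]; exists 0%N => a _ _.
  by rewrite (mod_e0 hx hxe); exact: (grmod_act0 hM (corner1 a)).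
- move=> x ->; split => //.
  by rewrite /eqmod /map_e /= ze (grmod_opp0 hM) h0.
Qed.

Lemma tails_zero_of_mod_e0 : tails_e_equivalence Ad e -> fg_mod 1 M ->
  exists P, [/\ is_gsub Ad 1 M P, cotorsion Ad 1 M P
            & forall x, P x -> torsion_el Ad 1 M x].
Proof.
case=> _ faithful _ hfg.
have Mgr : in_grmod Ad 1 M by [].
have [P [gsubP cotP hP]] := faithful M M Mgr Mgr _ _ _ _
  (trep_id hM) (trep_zero hM hM) trep_eq_mod_e0.
exists P; split => // x /hP [hx _].
by rewrite /eqmod /= (grmod_msubr0 hM hx) => -[].
Qed.

End ModE.

Definition posz_part (R : zmodType) (g : nat -> R) (j : int) : R :=
  match j with Posz d => g d | Negz _ => 0 end.

Lemma sum_posz_part (R : zmodType) n (g : nat -> R) :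
  \sum_(i <- iota 0 (n + n).+1) posz_part g (i%:Z - n%:Z) = \sum_(0 <= d < n.+1) g d.
Proof.
rewrite -addnS iotaD big_cat big1_seq ?Monoid.simpm; last first.
  move=> i /andP[_]; rewrite mem_iota => /andP[_ hi].
  by case E: (i%:Z - n%:Z) => [j|j] //=; lia.
rewrite -{1}(addn0 n) iotaDl big_map /index_iota subn0.
by apply: eq_bigr => i _; have -> : (n + i)%N%:Z - n%:Z = i%:Z by lia.
Qed.

Lemma uniform_bound (P : nat -> nat -> Prop) n :
  (forall i, (i < n)%N -> exists B, forall d, (B <= d)%N -> P i d) ->
  exists B, forall i, (i < n)%N -> forall d, (B <= d)%N -> P i d.
Proof.
elim: n => [|n IH] hP; first by exists 0%N.
have [B1 h1] := IH (fun i hi => hP i (ltnW hi)).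
have [B2 h2] := hP n (ltnSn n).
exists (maxn B1 B2) => i; rewrite ltnS leq_eqVlt => /predU1P[-> | lt] d hd.
  by apply: h2; apply: leq_trans hd; apply: leq_maxr.
by apply: h1 => //; apply: leq_trans hd; apply: leq_maxl.
Qed.

Section Quotient.
Variables (k : closedFieldType) (A : algType k) (Ad : nat -> A -> Prop) (I : A -> Prop).
Hypothesis grading : is_grading Ad.
Hypotheses (ideal0 : I 0) (idealD : forall x y, I x -> I y -> I (x + y))
  (idealN : forall x, I x -> I (- x)) (idealMr : forall x c, I x -> I (x * c))
  (ideal_hcomp : forall d x, I x -> I (hcomp Ad d x)).

Definition coset (x : A) : A -> Prop := fun y => I (x - y).

Lemma coset_eq x y : coset x = coset y <-> I (x - y).
Proof.
split=> [h | hxy].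
  have : coset y y by rewrite /coset subrr.
  by rewrite -h.
apply: functional_extensionality => w; apply: propositional_extensionality.
rewrite /coset; split => hw.
  by have := idealD (idealN hxy) hw; rewrite opprB addrA subrK.
by have := idealD hxy hw; rewrite addrA subrK.
Qed.

Definition coset_rep (X : A -> Prop) : A :=
  epsilon (inhabits 0) (fun x => X = coset x).

Lemma coset_repK x : coset (coset_rep (coset x)) = coset x.
Proof.
exact: esym (epsilon_spec (inhabits 0) (fun y => coset x = coset y) (ex_intro _ x erefl)).
Qed.

Lemma coset_rep_eq x : I (coset_rep (coset x) - x).
Proof. exact/coset_eq/coset_repK. Qed.

Lemma cosetD x y : coset (coset_rep (coset x) + coset_rep (coset y)) = coset (x + y).
Proof. by apply/coset_eq; rewrite opprD addrACA; apply: idealD; apply: coset_rep_eq. Qed.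

Lemma cosetN x : coset (- coset_rep (coset x)) = coset (- x).
Proof. by apply/coset_eq; rewrite -opprD; apply: idealN; apply: coset_rep_eq. Qed.

Lemma cosetM x a : coset (coset_rep (coset x) * a) = coset (x * a).
Proof. by apply/coset_eq; rewrite -mulrBl; apply: idealMr; apply: coset_rep_eq. Qed.

Definition quot_deg (i : int) (X : A -> Prop) : Prop :=
  match i with Posz d => exists x, Ad d x /\ X = coset x | Negz _ => X = coset 0 end.

Definition quot : rawmod A :=
  @RawMod k A (A -> Prop) (fun X => exists x, X = coset x) (coset 0)
    (fun X Y => coset (coset_rep X + coset_rep Y)) (fun X => coset (- coset_rep X))
    (fun X a => coset (coset_rep X * a)) quot_deg.

Lemma msum_coset (s : seq nat) (g : nat -> A) :
  @msum _ _ quot [seq coset (g i) | i <- s] = coset (\sum_(i <- s) g i).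
Proof.
elim: s => [|i s IH]; first by rewrite big_nil.
by rewrite big_cons -cosetD -IH.
Qed.

Lemma zsum_coset n (g : int -> A) :
  @zsum _ _ quot n (fun j => coset (g j))
  = coset (\sum_(i <- iota 0 (n + n).+1) g (i%:Z - n%:Z)).
Proof. exact: (msum_coset _ (fun i => g (i%:Z - n%:Z))). Qed.

Lemma quot_deg0 i : quot_deg i (coset 0).
Proof. by case: i => [d|d] //=; exists 0; split => //; apply: hom0. Qed.

Lemma quot_deg_coset d X : quot_deg (Posz d) X -> X = coset (hcomp Ad d (coset_rep X)).
Proof.
move=> [x [hx ->]]; apply/coset_eq.
have hxx : hcomp Ad d x = x by rewrite (hcomp_hom grading d hx) eqxx.
rewrite -{1}hxx -(hcompN grading) -(hcompD grading); apply: ideal_hcomp.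
by rewrite -opprB; apply: idealN; apply: coset_rep_eq.
Qed.

Lemma quot_decomp X : (exists x, X = coset x) ->
  exists n (c : int -> A -> Prop), (forall i, quot_deg i (c i)) /\ X = @zsum _ _ quot n c.
Proof.
move=> [x ->]; have [m [c [hc ex]]] := hom_decomp grading x.
exists m, (fun j => coset (posz_part (trunc m c) j)); split.
  by case=> d //=; exists (trunc m c d); split => //; apply: trunc_hom.
by rewrite zsum_coset sum_posz_part big_mkord sum_trunc // ex.
Qed.

Lemma quot_deg_uniq n (c : int -> A -> Prop) : (forall i, quot_deg i (c i)) ->
  @zsum _ _ quot n c = coset 0 -> forall i, (`|i| <= n)%N -> c i = coset 0.
Proof.
move=> hc hsum [d|d] hd; last exact: hc (Negz d).
pose g j := hcomp Ad j (coset_rep (c (Posz j))).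
have ec : c = fun j => coset (posz_part g j).
  apply: functional_extensionality => -[j|j]; first exact: quot_deg_coset.
  exact: hc (Negz j).
move: hsum; rewrite ec zsum_coset sum_posz_part => /coset_eq.
rewrite subr0 => /(ideal_hcomp d).
rewrite (hcomp_sum grading) (eq_bigr (fun j => if j == d then g j else 0)); last first.
  move=> j _; rewrite (hcomp_hom grading d (hcompP grading j _)) eq_sym.
  by case: eqP => [->|].
rewrite -big_mkcond big_nat1_eq /= ltnS hd => hg.
by apply/coset_eq; rewrite subr0.
Qed.

Lemma quot_grmod : is_grmod Ad 1 quot.
Proof.
split.
- split; first split.
  + by exists 0.
  + by move=> _ _ [x ->] [y ->]; rewrite /= cosetD; exists (x + y).
  + by move=> _ [x ->]; rewrite /= cosetN; exists (- x).
  + move=> _ _ _ [x ->] [y ->] [w ->].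
    by rewrite /= (cosetD y w) (cosetD x y) !cosetD addrA.
  + by move=> _ _ [x ->] [y ->]; rewrite /= !cosetD addrC.
  + by move=> _ [x ->]; rewrite /= cosetD add0r.
  + by move=> _ [x ->]; rewrite /= cosetN cosetD subrr.
- split.
  + by move=> _ a [x ->] _; rewrite /= cosetM; exists (x * a).
  + by move=> _ a b [x ->] _ _; rewrite /= !cosetM cosetD mulrDr.
  + by move=> _ _ a [x ->] [y ->] _; rewrite /= cosetD !cosetM cosetD mulrDl.
  + by move=> _ a b [x ->] _ _; rewrite /= (cosetM x a) !cosetM mulrA.
  + by move=> _ [x ->]; rewrite /= cosetM mulr1.
- split.
  + by case=> [d|d] X /=; [move=> [x [_ ->]]; exists x | move=> ->; exists 0].
  + exact: quot_deg0.
  + case=> [d|d] X Y /=; last by move=> -> ->; rewrite cosetD addr0.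
    move=> [x [hx ->]] [y [hy ->]]; exists (x + y); split; last by rewrite cosetD.
    exact: homD.
  + case=> [d|d] X /=; last by move=> ->; rewrite cosetN oppr0.
    by move=> [x [hx ->]]; exists (- x); split; [apply: homN | rewrite cosetN].
  + case=> [d|d] j X a /=; last by move=> -> _ _; rewrite cosetM mul0r; apply: quot_deg0.
    move=> [x [hx ->]] _ ha; rewrite cosetM; exists (x * a); split => //.
    exact: homM.
- exact: quot_decomp.
- exact: quot_deg_uniq.
Qed.

Lemma quot_fg : fg_mod 1 quot.
Proof.
exists 1%N, (fun _ => coset 1); split; first by move=> i _; exists 1.
move=> _ [x ->]; exists (fun _ => x); split; first by move=> i; apply: corner1.
by rewrite /msum /= cosetM mul1r cosetD addr0.
Qed.

Lemma quot_mod_e0 e : (forall x, I (x * e)) ->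
  forall X, rm_S quot X -> rm_act X e = X -> X = rm_zero quot.
Proof.
move=> hIe _ [x ->]; rewrite /= cosetM => <-.
by apply/coset_eq; rewrite subr0.
Qed.

Lemma quot_locally_torsion e : tails_e_equivalence Ad e -> (forall x, I (x * e)) ->
  exists n0, forall b, geq_part Ad n0 b ->
    exists m, forall c, geq_part Ad m c -> I (b * c).
Proof.
move=> equiv hIe.
have [P [_ cotP torP]] :=
  tails_zero_of_mod_e0 quot_grmod (quot_mod_e0 hIe) equiv quot_fg.
have [n0 hn0] := cotP (coset 1) (ex_intro _ 1 erefl).
exists n0 => b hb; have [m hm] := torP _ (hn0 b (corner1 b) hb).
exists m => c hc; have := hm c (corner1 c) hc.
by rewrite /= cosetM -mulrA cosetM mul1r => /coset_eq; rewrite subr0.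
Qed.

Definition high_degree_in (y : A) : Prop :=
  exists B, forall d, (B <= d)%N -> forall w, I (hcomp Ad d (y * w)).

Lemma high_degree_in_hom d h m : Ad d h ->
  (forall c, geq_part Ad m c -> I (h * c)) -> high_degree_in h.
Proof.
move=> hh hm; exists (d + m)%N => d' hd' w.
rewrite (hcompMl grading w d' hh) ifT; last by lia.
by apply: hm; apply: (hom_geq_part grading (hcompP grading _ _)); lia.
Qed.

Lemma high_degree_in0 : high_degree_in 0.
Proof. by exists 0%N => d _ w; rewrite mul0r (hcomp0 grading). Qed.

Lemma high_degree_inD a b :
  high_degree_in a -> high_degree_in b -> high_degree_in (a + b).
Proof.
move=> [B1 h1] [B2 h2]; exists (maxn B1 B2) => d; rewrite geq_max => /andP[hd1 hd2] w.
by rewrite mulrDl (hcompD grading); apply: idealD; [apply: h1 | apply: h2].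
Qed.

Lemma high_degree_inMr a b : high_degree_in a -> high_degree_in (a * b).
Proof. by move=> [B h]; exists B => d hd w; rewrite -mulrA; apply: h. Qed.

Lemma high_degree_in_uniform : right_noetherian_corner (1 : A) ->
  exists B, forall y, high_degree_in y -> forall d, (B <= d)%N -> I (hcomp Ad d y).
Proof.
move=> noeth; have [n [g [hg hgen]]] := noeth high_degree_in (fun a _ => corner1 a)
  high_degree_in0 high_degree_inD (fun a b ha _ => high_degree_inMr b ha).
have [B hB] := uniform_bound hg.
exists B => y /hgen [c [_ ->]] d hd.
by rewrite (hcomp_sum grading); apply: (ideal_sum ideal0 idealD) => i; apply: hB.
Qed.

Lemma ideal_geq_part : right_noetherian_corner (1 : A) ->
  (exists n0, forall b, geq_part Ad n0 b ->
     exists m, forall c, geq_part Ad m c -> I (b * c)) ->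
  exists N, forall b, geq_part Ad N b -> I b.
Proof.
move=> noeth [n0 hn0]; have [B hB] := high_degree_in_uniform noeth.
exists (maxn n0 B) => _ [r [c [hc ->]]]; apply: (ideal_sum ideal0 idealD) => i.
have hci : geq_part Ad n0 (c i) by apply: (hom_geq_part grading (hc i)); lia.
have [m hm] := hn0 (c i) hci.
have <- : hcomp Ad (maxn n0 B + i) (c i) = c i.
  by rewrite (hcomp_hom grading _ (hc i)) eqxx.
by apply: hB; [apply: high_degree_in_hom (hc i) hm | lia].
Qed.

End Quotient.

Theorem lemma3p17 (k : closedFieldType) (A : algType k)
  (Ad : nat -> A -> Prop) (e : A) :
  is_grading Ad ->
  right_noetherian_corner (1 : A) ->
  e * e = e -> Ad 0%N e ->
  right_noetherian_corner e ->
  (* Ae is in grmod eAe *)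
  (exists (n : nat) (g : nat -> A), (forall i, g i * e = g i) /\
     forall x, x * e = x -> exists c : nat -> A,
       (forall i, corner e (c i)) /\ x = \sum_(i < n) g i * c i) ->
  tails_e_equivalence Ad e ->
  (* A/(e) is a torsion right A-module *)
  forall a : A, exists n : nat, forall b : A, geq_part Ad n b -> ideal_gen e (a * b).
Proof.
move=> grading noeth _ he0 _ _ equiv a.
have ideal_gen_e x : ideal_gen e (x * e) := ideal_genMl x (ideal_gen_id e).
have [N hN] := ideal_geq_part grading (ideal_gen0 e) (@ideal_genD _ _ e) noeth
  (quot_locally_torsion grading (ideal_gen0 e) (@ideal_genD _ _ e) (@ideal_genN _ _ e)
     (@ideal_genMr _ _ e) (ideal_gen_hcomp grading he0) equiv ideal_gen_e).
by exists N => b /hN; apply: ideal_genMl.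
Qed.
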